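(* Let $K$ be a compact Hausdorff space and let $p\in K$ be a non-$P$-point of $K$, i.e. there exists $g\in C(K)$ which is not constant on any open neighbourhood of $p$. Then the Banach space $C(K,p)=\{f\in C(K): f(p)=0\}$ (with the sup norm) fails the ball fixed point property.
   Context: $C(K)$ is the real Banach space of continuous functions on $K$ with the sup norm. A real Banach space $X$ has the ball fixed point property (BFPP) if every nonexpansive map $T\colon B_X\to B_X$ (i.e. $\|Tx-Ty\|\le\|x-y\|$) has a fixed point, where $B_X$ is the closed unit ball. *)

From HB Require Import structures.
From mathcomp Require Import all_boot all_order all_algebra.
From mathcomp Require Import all_classical all_reals all_analysis.
Set Implicit Arguments. Unset Strict Implicit. Unset Printing Implicit Defensive.
Import Order.TTheory GRing.Theory Num.Theory.
Import numFieldNormedType.Exports.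
Local Open Scope classical_set_scope.
Local Open Scope ring_scope.

(* Sup norm of a real function on K (for continuous f on compact K this is the
   usual norm of C(K)). *)
Definition supnorm (R : realType) (K : Type) (f : K -> R) : R :=
  sup (range (fun x => `|f x|)).

Definition CKp (R : realType) (K : topologicalType) (p : K) : set (K -> R) :=
  [set f | continuous f /\ f p = 0].

Definition ball_CKp (R : realType) (K : topologicalType) (p : K) : set (K -> R) :=
  [set f | @CKp R K p f /\ supnorm f <= 1].

Definition non_P_point (R : realType) (K : topologicalType) (p : K) : Prop :=
  exists g : K -> R, continuous g /\
    forall U : set K, open U -> U p -> exists x y, U x /\ U y /\ g x <> g y.

(* Ball fixed point property of C(K,p): every nonexpansive self-map of the
   closed unit ball has a fixed point.  (T is given as a function on all of
   K -> R; only its behaviour on the ball matters.) *)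
Definition BFPP_CKp (R : realType) (K : topologicalType) (p : K) : Prop :=
  forall T : (K -> R) -> (K -> R),
    (forall f, @ball_CKp R K p f -> @ball_CKp R K p (T f)) ->
    (forall f g, @ball_CKp R K p f -> @ball_CKp R K p g ->
       supnorm (fun x => T f x - T g x) <= supnorm (fun x => f x - g x)) ->
    exists f, @ball_CKp R K p f /\ T f = f.

From mathcomp Require Import all_boot all_order all_algebra.
From mathcomp Require Import all_classical all_reals all_analysis.
From mathcomp Require Import ring lra.
Set Implicit Arguments. Unset Strict Implicit. Unset Printing Implicit Defensive.
Import Order.TTheory GRing.Theory Num.Theory.
Import numFieldNormedType.Exports.
Local Open Scope classical_set_scope.
Local Open Scope ring_scope.

(* Take h := |g - g(p)|, continuous, nonnegative and zero at p, and the map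
   T f := min(1, f + h).  It sends the unit ball of C(K,p) into itself and is
   nonexpansive because t |-> min(1, t) is 1-Lipschitz.  If T f = f, then
   |f| < 1 near p since f(p) = 0, so there the truncation is inactive and
   f = f + h, i.e. h = 0: g is constant on a neighbourhood of p, which a
   non-P-point forbids. *)

Lemma dist_min_le (R : realDomainType) (c a b : R) :
  `|Num.min c a - Num.min c b| <= `|a - b|.
Proof.
have ab_le : a - b <= `|a - b| := ler_norm _.
have ba_le : b - a <= `|a - b| by rewrite distrC ler_norm.
rewrite ler_norml !minEle.
by case: (leP c a) => ca; case: (leP c b) => cb; apply/andP; split; lra.
Qed.

Lemma min_addr_id_eq0 (R : realDomainType) (c a t : R) :
  a < c -> Num.min c (a + t) = a -> t = 0.
Proof. by rewrite minEle; case: ifP => _ ac E; lra. Qed.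

Section Supnorm.
Variables (R : realType) (K : topologicalType).

Lemma normr_le_supnorm (u : K -> R) :
  compact [set: K] -> continuous u -> forall x, `|u x| <= supnorm u.
Proof.
move=> cK cu x.
have cnu : {within [set: K], continuous (fun y => `|u y|)}.
  by apply/continuous_subspaceT => y; apply: cvg_norm; exact: cu.
have [c _ c_max] := compact_EVT_max (ex_intro _ x I) cK cnu.
apply: ub_le_sup; last by exists x.
by exists `|u c| => _ [y _ <-]; apply: c_max; rewrite inE.
Qed.

Lemma supnorm_le (u : K -> R) (x0 : K) (c : R) :
  (forall x, `|u x| <= c) -> supnorm u <= c.
Proof. by move=> u_le; apply: ge_sup => [|_ [x _ <-]]; [exists `|u x0|, x0|]. Qed.

End Supnorm.

Section TruncatedShift.
Variables (R : realType) (K : topologicalType) (p : K) (h : K -> R).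
Hypotheses (cK : compact [set: K]) (ch : continuous h).
Hypotheses (h_ge0 : forall x, 0 <= h x) (hp : h p = 0).

Definition trunc_shift (f : K -> R) : K -> R := fun x => Num.min 1 (f x + h x).

Lemma continuous_trunc_shift f : continuous f -> continuous (trunc_shift f).
Proof.
move=> cf x; apply: (@continuous_min _ _ (fun=> 1) (fun x => f x + h x)).
  exact: cvg_cst.
by apply: cvgD; [exact: cf | exact: ch].
Qed.

Lemma trunc_shift_ball f : ball_CKp p f -> ball_CKp p (trunc_shift f).
Proof.
move=> [[cf fp] f_le1]; split; first split.
- exact: continuous_trunc_shift.
- by rewrite /trunc_shift fp hp addr0 minEle ler10.
apply: (supnorm_le p) => x.
have /andP[f_ge _] : -1 <= f x <= 1.
  by rewrite -ler_norml (le_trans (normr_le_supnorm cK cf x)).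
have := h_ge0 x; rewrite ler_norml /trunc_shift le_min ge_min lexx /=.
by move=> hx; apply/andP; split; lra.
Qed.

Lemma trunc_shift_nonexpansive f1 f2 : continuous f1 -> continuous f2 ->
  supnorm (fun x => trunc_shift f1 x - trunc_shift f2 x)
    <= supnorm (fun x => f1 x - f2 x).
Proof.
move=> cf1 cf2; apply: (supnorm_le p) => x.
apply: le_trans (dist_min_le _ _ _) _.
have -> : f1 x + h x - (f2 x + h x) = f1 x - f2 x by ring.
apply: (normr_le_supnorm (u := fun x => f1 x - f2 x) cK).
by move=> y; apply: cvgB; [exact: cf1 | exact: cf2].
Qed.

Lemma trunc_shift_fixed_near f : continuous f -> f p = 0 ->
  trunc_shift f = f -> \forall x \near p, h x = 0.
Proof.
move=> cf fp Tf; have: \forall x \near p, `|f p - f x| < 1.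
  by apply: cvgr_dist_lt; [exact: cf | exact: ltr01].
apply: filterS => x; rewrite fp sub0r normrN ltr_norml => /andP[_ fx_lt1].
by apply: (min_addr_id_eq0 fx_lt1); rewrite -[RHS](congr1 (@^~ x) Tf).
Qed.

End TruncatedShift.

Lemma non_P_point_not_near_const (R : realType) (K : topologicalType) (p : K)
    (g : K -> R) :
  (forall U : set K, open U -> U p -> exists x y, U x /\ U y /\ g x <> g y) ->
  ~ \forall x \near p, g x = g p.
Proof.
rewrite /prop_near1 nbhsE => g_nonconst [U [oU Up] Ug].
have [x [y [Ux [Uy]]]] := g_nonconst U oU Up.
by rewrite (Ug x Ux) (Ug y Uy).
Qed.

Theorem mainTheorem16 (R : realType) (K : topologicalType) (p : K) :
  hausdorff_space K -> compact [set: K] -> @non_P_point R K p -> ~ @BFPP_CKp R K p.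
Proof.
move=> _ cK [g [cg g_nonconst]] bfpp.
pose h x := `|g x - g p|.
have ch : continuous h.
  by move=> x; apply: cvg_norm; apply: cvgB; [exact: cg | exact: cvg_cst].
have hp : h p = 0 by rewrite /h subrr normr0.
have [f [[[cf fp] _] Tf]] := bfpp (trunc_shift h)
  (trunc_shift_ball cK ch (fun x => normr_ge0 _) hp)
  (fun f1 f2 f1B f2B => trunc_shift_nonexpansive p h cK f1B.1.1 f2B.1.1).
apply: (non_P_point_not_near_const g_nonconst).
apply: filterS (trunc_shift_fixed_near cf fp Tf) => x /eqP.
by rewrite normr_eq0 subr_eq0 => /eqP.
Qed.
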